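(* Let $m,n\ge 2$ and $L\ge 2$ be integers, and let $p_1,\dots,p_L$ and $q_1,\dots,q_L$ be positive integers with $n=\prod_{\ell=1}^Lp_\ell$ and $m=\prod_{\ell=1}^Lq_\ell$. For positive integers $r_1,\dots,r_{L-1}$ (with $r_0=r_L:=1$) consider the architecture $\beta=(\pi_\ell)_{\ell=1}^L$ with $\pi_\ell=(a_\ell,b_\ell,c_\ell,d_\ell)$, $a_\ell=\prod_{j=1}^{\ell-1}p_j$, $d_\ell=\prod_{j=\ell+1}^Lq_j$, $b_\ell=q_\ell r_{\ell-1}$, $c_\ell=p_\ell r_\ell$. (1) If $p_\ell\ge 2$ and $q_\ell\ge 2$ for every $1\le\ell\le L$, then there exists a choice of integers $r_1,\dots,r_{L-1}$ for which $\beta$ is non-redundant. (2) If $q_1=1$, or $p_L=1$, or $p_\ell q_\ell=1$ for some $2\le\ell\le L-1$, then no choice of $r_1,\dots,r_{L-1}$ makes $\beta$ non-redundant.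
   Context: Patterns are tuples $(a,b,c,d)$ of positive integers. Patterns $\pi=(a,b,c,d),\pi'=(a',b',c',d')$ are chainable if $ac/a'=b'd'/d=:r(\pi,\pi')$ is an integer, $a\mid a'$, $d'\mid d$; a chainable pair is redundant if $r(\pi,\pi')\ge\min(b,c')$. A chainable architecture (sequence of patterns whose consecutive pairs are chainable) is redundant if some consecutive pair is redundant, and non-redundant otherwise. (The architectures defined in the claim are always chainable.) *)

From mathcomp Require Import all_boot.
Set Implicit Arguments. Unset Strict Implicit. Unset Printing Implicit Defensive.

Record pattern := Pattern { pa : nat; pb : nat; pc : nat; pd : nat }.

Definition ratio (x y : pattern) : nat := (pa x * pc x) %/ pa y.

Definition chainable (x y : pattern) : bool :=
  [&& pa y %| pa x * pc x, pd x %| pb y * pd y,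
      (pa x * pc x) %/ pa y == (pb y * pd y) %/ pd x,
      pa x %| pa y & pd y %| pd x].

Definition redundant_pair (x y : pattern) : bool :=
  minn (pb x) (pc y) <= ratio x y.

Definition consec_pairs (s : seq pattern) : seq (pattern * pattern) :=
  zip s (behead s).

Definition chainable_arch (s : seq pattern) : bool :=
  all (fun pp => chainable pp.1 pp.2) (consec_pairs s).

Definition nonredundant (s : seq pattern) : bool :=
  chainable_arch s && all (fun pp => ~~ redundant_pair pp.1 pp.2) (consec_pairs s).

(* the architecture beta of the corollary; p, q, r are indexed from 1,
   and r_0 = r_L = 1 are forced regardless of the values r 0, r L. *)
Definition rext (L : nat) (r : nat -> nat) (l : nat) : nat :=
  if (l == 0) || (l == L) then 1 else r l.

Definition beta_pat (L : nat) (p q r : nat -> nat) (l : nat) : pattern :=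
  Pattern (\prod_(1 <= j < l) p j)
          (q l * rext L r l.-1)
          (p l * rext L r l)
          (\prod_(l.+1 <= j < L.+1) q j).

Definition beta (L : nat) (p q r : nat -> nat) : seq pattern :=
  [seq beta_pat L p q r l | l <- iota 1 L].

(** Consecutive patterns of [beta] always chain, since [a_(l+1) = a_l p_l]
    and [d_l = q_(l+1) d_(l+1)], and their ratio is exactly [r_l].  Hence
    [beta] is non-redundant iff [r_l < min (q_l r_(l-1)) (p_(l+1) r_(l+1))]
    for every [1 <= l < L].  When all [p_l, q_l >= 2] the constant choice
    [r = 1] satisfies this.  If [q_1 = 1] the condition at [l = 1] reads
    [r_1 < r_0 = 1]; if [p_L = 1] the one at [l = L - 1] reads
    [r_(L-1) < r_L = 1]; and if [p_l = q_l = 1] the conditions at [l - 1]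
    and [l] give [r_(l-1) < r_l < r_(l-1)]. *)
From mathcomp Require Import all_boot.
From mathcomp Require Import zify.

Lemma zip_behead_map_iota (T : Type) (f : nat -> T) a n :
  zip (map f (iota a n.+1)) (behead (map f (iota a n.+1))) =
  map (fun l => (f l, f l.+1)) (iota a n).
Proof. by elim: n a => [|n IHn] a //=; rewrite IHn. Qed.

Lemma prod_nat_gt0 (F : nat -> nat) a b :
  (forall i, a <= i < b -> 0 < F i) -> 0 < \prod_(a <= i < b) F i.
Proof.
move=> F_gt0; rewrite big_seq; apply: prodn_cond_gt0 => i.
by rewrite mem_index_iota; apply: F_gt0.
Qed.

Section Beta.

Variables (L : nat) (p q : nat -> nat).
Hypothesis p_gt0 : forall l, 1 <= l <= L -> 0 < p l.
Hypothesis q_gt0 : forall l, 1 <= l <= L -> 0 < q l.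

Local Notation bpat r := (beta_pat L p q r).

Lemma rext_gt0 (r : nat -> nat) l :
  (forall l, 1 <= l < L -> 0 < r l) -> l <= L -> 0 < rext L r l.
Proof.
by move=> r_gt0 le_lL; rewrite /rext; case: ifP => // /norP [? ?]; apply: r_gt0; lia.
Qed.

Lemma ratio_beta_pat r l : 1 <= l < L -> ratio (bpat r l) (bpat r l.+1) = rext L r l.
Proof.
move=> lL; rewrite /ratio /= big_nat_recr /=; last by lia.
rewrite mulnA mulKn // muln_gt0 p_gt0 ?andbT; last by lia.
by apply: prod_nat_gt0 => i ?; apply: p_gt0; lia.
Qed.

Lemma chainable_beta_pat r l : 1 <= l < L -> chainable (bpat r l) (bpat r l.+1).
Proof.
move=> lL; rewrite /chainable /= big_nat_recr /=; last by lia.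
rewrite (@big_ltn _ _ _ l.+1); last by lia.
set A := \prod_(1 <= j < l) p j; set D := \prod_(l.+2 <= j < L.+1) q j.
have A_gt0 : 0 < A * p l.
  rewrite muln_gt0 p_gt0 ?andbT; last by lia.
  by apply: prod_nat_gt0 => i ?; apply: p_gt0; lia.
have D_gt0 : 0 < q l.+1 * D.
  rewrite muln_gt0 q_gt0 /=; last by lia.
  by apply: prod_nat_gt0 => i ?; apply: q_gt0; lia.
rewrite mulnA (mulnAC (q _)) !mulKn // eqxx dvdn_mulr // dvdn_mulr // dvdn_mulr //.
by rewrite dvdn_mull.
Qed.

Lemma consec_pairs_beta r :
  consec_pairs (beta L p q r) = [seq (bpat r l, bpat r l.+1) | l <- iota 1 L.-1].
Proof. by case: L => [|n] //; rewrite /consec_pairs /beta zip_behead_map_iota. Qed.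

Lemma nonredundant_betaP r :
  reflect (forall l, 1 <= l < L ->
             rext L r l < minn (q l * rext L r l.-1) (p l.+1 * rext L r l.+1))
          (nonredundant (beta L p q r)).
Proof.
have in_range l : (l \in iota 1 L.-1) = (1 <= l < L) by rewrite mem_iota; lia.
rewrite /nonredundant /chainable_arch consec_pairs_beta !all_map.
have -> : all (fun l => chainable (bpat r l) (bpat r l.+1)) (iota 1 L.-1).
  by apply/allP => l; rewrite in_range; apply: chainable_beta_pat.
apply: (iffP allP) => nonred l; rewrite ?in_range => lL /=.
- by have := nonred l; rewrite in_range /= /redundant_pair ratio_beta_pat // -ltnNge; apply.
- by rewrite /redundant_pair ratio_beta_pat // -ltnNge; apply: nonred.
Qed.

Lemma nonredundant_beta_const1 :
  (forall l, 1 <= l <= L -> 2 <= p l /\ 2 <= q l) ->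
  nonredundant (beta L p q (fun => 1)).
Proof.
move=> pq_ge2; apply/nonredundant_betaP => l lL.
have rext1 k : rext L (fun => 1) k = 1 by rewrite /rext; case: ifP.
have [p_ge2 _] := pq_ge2 l.+1 ltac:(lia).
have [_ q_ge2] := pq_ge2 l ltac:(lia).
by rewrite !rext1 !muln1 leq_min q_ge2 p_ge2.
Qed.

Lemma redundant_beta_unit_factor r :
  (forall l, 1 <= l < L -> 0 < r l) -> 2 <= L ->
  (q 1 = 1 \/ p L = 1 \/ exists l, 2 <= l <= L.-1 /\ p l * q l = 1) ->
  ~~ nonredundant (beta L p q r).
Proof.
move=> r_gt0 L_ge2 unit_factor; apply/nonredundant_betaP => nonred.
have s_gt0 l : l <= L -> 0 < rext L r l by apply: rext_gt0.
have rext0 : rext L r 0 = 1 by [].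
have rextL : rext L r L = 1 by rewrite /rext eqxx orbT.
case: unit_factor => [q1 | [pL | [l [lL /eqP]]]].
- have := nonred 1 ltac:(lia); rewrite q1 mul1n rext0 leq_min.
  by have := s_gt0 1 ltac:(lia); lia.
- have := nonred L.-1 ltac:(lia); rewrite prednK ?pL ?rextL ?muln1 ?leq_min; last by lia.
  by have := s_gt0 L.-1 ltac:(lia); lia.
- rewrite muln_eq1 => /andP [/eqP p1 /eqP q1].
  have := nonred l ltac:(lia); have := nonred l.-1 ltac:(lia).
  by rewrite prednK ?p1 ?q1 ?mul1n ?leq_min; lia.
Qed.

End Beta.

Theorem corollary4p17 (m n L : nat) (p q : nat -> nat) :
  2 <= m -> 2 <= n -> 2 <= L ->
  (forall l, 1 <= l <= L -> 0 < p l) ->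
  (forall l, 1 <= l <= L -> 0 < q l) ->
  n = \prod_(1 <= l < L.+1) p l ->
  m = \prod_(1 <= l < L.+1) q l ->
  ((forall l, 1 <= l <= L -> 2 <= p l /\ 2 <= q l) ->
     exists r : nat -> nat,
       (forall l, 1 <= l < L -> 0 < r l) /\ nonredundant (beta L p q r))
  /\
  ((q 1 = 1 \/ p L = 1 \/ exists l, 2 <= l <= L.-1 /\ p l * q l = 1) ->
     forall r : nat -> nat,
       (forall l, 1 <= l < L -> 0 < r l) -> ~~ nonredundant (beta L p q r)).
Proof.
move=> _ _ L_ge2 p_gt0 q_gt0 _ _; split.
- by move=> pq_ge2; exists (fun => 1); split => //; apply: nonredundant_beta_const1.
- by move=> unit_factor r r_gt0; apply: redundant_beta_unit_factor.
Qed.
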